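(* Let $(S,d)$, $(S',d')$, $(R,d_R)$ be Polish spaces and let $g:S'\times S\to R$ be a (Borel measurable) map that is $K$-Lipschitz in the second variable, i.e. $d_R(g(x,y),g(x,z))\le K\,d(y,z)$ for all $x\in S'$, $y,z\in S$. Let $X$ be an $S'$-valued random variable and $Y,Z$ be $S$-valued random variables such that $X$ is independent of $Y$ and $X$ is independent of $Z$. Then $\rho_P^R(g(X,Y),g(X,Z))\le(1\vee K)\,\rho_P^S(Y,Z)$.
   Context: For a Polish space $(S,d)$ and $\mu,\nu\in\mathcal{P}(S)$, the Prokhorov distance is $\rho_P^S(\mu,\nu)=\inf\{\epsilon>0:\mu(B)\le\nu(B^\epsilon)+\epsilon\text{ for all Borel sets }B\}$, where $B^\epsilon=\{x\in S:d(x,B)<\epsilon\}$. For random variables $U,V$ with values in $S$, $\rho_P^S(U,V)$ means $\rho_P^S(\operatorname{law}(U),\operatorname{law}(V))$. $a\vee b=\max(a,b)$. *)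

From mathcomp Require Import all_boot all_order all_algebra.
From mathcomp Require Import all_classical all_reals all_analysis.
Set Implicit Arguments. Unset Strict Implicit. Unset Printing Implicit Defensive.
Import Order.TTheory GRing.Theory Num.Theory.
Local Open Scope classical_set_scope.
Local Open Scope ring_scope.

Section MetricDefs.
Context {R : realType} {T : Type}.
Implicit Types (d : T -> T -> R).

Definition is_metric d : Prop :=
  (forall x y, 0 <= d x y) /\ (forall x y, d x y = 0 <-> x = y) /\
  (forall x y, d x y = d y x) /\ (forall x y z, d x z <= d x y + d y z).

Definition dball d (x : T) (r : R) : set T := [set y | d x y < r].
Definition mopen d (U : set T) : Prop :=
  forall x, U x -> exists2 r : R, 0 < r & dball d x r `<=` U.

Definition metric_separable d : Prop :=
  exists D : set T, countable D /\
    forall x (e : R), 0 < e -> exists2 y, D y & d x y < e.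

Definition metric_complete d : Prop :=
  forall u : nat -> T,
    (forall e : R, 0 < e -> exists N, forall m n, (N <= m)%N -> (N <= n)%N ->
        d (u m) (u n) < e) ->
    exists l, forall e : R, 0 < e -> exists N, forall n, (N <= n)%N -> d (u n) l < e.

Definition polish d : Prop := [/\ is_metric d, metric_separable d & metric_complete d].

Definition borel_set d : set (set T) := <<s mopen d >>.

(* B^eps = {x | d(x,B) < eps} = {x | exists y in B, d(x,y) < eps} *)
Definition enlarge d (B : set T) (e : R) : set T :=
  [set x | exists2 y, B y & d x y < e].

Definition prokhorov d (mu nu : set T -> \bar R) : \bar R :=
  ereal_inf [set (e%:E)%E | e in
     [set e : R | 0 < e /\ forall B, borel_set d B ->
        (mu B <= nu (enlarge d B e) + e%:E)%E]].
End MetricDefs.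

Section ProdBorel.
Context {R : realType} {T1 T2 : Type}.
Definition prod_borel (d1 : T1 -> T1 -> R) (d2 : T2 -> T2 -> R) : set (set (T1 * T2)) :=
  <<s [set C | exists A B, [/\ borel_set d1 A, borel_set d2 B & C = A `*` B]] >>.
End ProdBorel.

Section RV.
Context {R : realType} {dO : measure_display} {Omega : measurableType dO}.
Context (P : probability Omega R).

Definition rv_measurable {T : Type} (d : T -> T -> R) (X : Omega -> T) : Prop :=
  forall B, borel_set d B -> measurable (X @^-1` B).

Definition law {T : Type} (X : Omega -> T) : set T -> \bar R :=
  fun B => P (X @^-1` B).

Definition independent_rv {T1 T2 : Type} (d1 : T1 -> T1 -> R) (d2 : T2 -> T2 -> R)
  (X : Omega -> T1) (Y : Omega -> T2) : Prop :=
  forall A B, borel_set d1 A -> borel_set d2 B ->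
    P (X @^-1` A `&` Y @^-1` B) = (P (X @^-1` A) * P (Y @^-1` B))%E.
End RV.

From HB Require Import structures.
From mathcomp Require Import all_boot all_order all_algebra.
From mathcomp Require Import all_classical all_reals all_analysis.
Set Implicit Arguments. Unset Strict Implicit. Unset Printing Implicit Defensive.
Import Order.TTheory GRing.Theory Num.Theory.
Local Open Scope classical_set_scope.
Local Open Scope ring_scope.

(* Condition on X.  By independence the joint law of (X, Y) is the product
   law(X) \x law(Y), so P(g(X,Y) \in C) integrates, against law(X), the
   probabilities P(Y \in A_x) of the sections A_x = {y | g(x,y) \in C}; likewise
   for Z.  Since g(x, .) is K-Lipschitz, the e-enlargement of A_x lies in the
   section of the preimage of C^(c e), c = max(1, K).  Hence a Prokhorov bound
   e for (Y, Z) holds sectionwise, and integrating it shows that c e is a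
   Prokhorov bound for (g(X,Y), g(X,Z)). *)

Section independent_pair.
Context {R : realType} {dO d1 d2 : measure_display} {Omega : measurableType dO}
  {T1 : measurableType d1} {T2 : measurableType d2} (P : probability Omega R).
Local Open Scope ereal_scope.

Definition independent (X : Omega -> T1) (Y : Omega -> T2) : Prop :=
  forall A B, measurable A -> measurable B ->
    P (X @^-1` A `&` Y @^-1` B) = P (X @^-1` A) * P (Y @^-1` B).

Lemma independent_pair_preimageE (X : {RV P >-> T1}) (Y : {RV P >-> T2}) D :
  independent X Y -> measurable D ->
  P ((fun w => (X w, Y w)) @^-1` D) = (distribution P X \x distribution P Y) D.
Proof.
move=> iXY mD.
pose XY : {RV P >-> (T1 * T2)%type} :=
  mfun_Sub (mem_set (measurable_fun_pair (measurable_funPT X) (measurable_funPT Y))).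
symmetry; apply: (product_measure_unique (m' := distribution P XY) _ mD).
exact: iXY.
Qed.

Lemma independent_pair_preimage_le (X : {RV P >-> T1}) (Y Z : {RV P >-> T2})
    (A D : set (T1 * T2)) (e : R) :
  independent X Y -> independent X Z -> measurable A -> measurable D ->
  (0 <= e)%R ->
  (forall x, P (Y @^-1` xsection A x) <= P (Z @^-1` xsection D x) + e%:E) ->
  P ((fun w => (X w, Y w)) @^-1` A) <= P ((fun w => (X w, Z w)) @^-1` D) + e%:E.
Proof.
move=> iXY iXZ mA mD e_ge0 sectionwise.
rewrite (independent_pair_preimageE iXY mA) (independent_pair_preimageE iXZ mD).
rewrite /product_measure1 /=.
have mYA := measurable_fun_xsection (distribution P Y) mA.
have mZD := measurable_fun_xsection (distribution P Z) mD.
apply: (le_trans (ge0_le_integral _ _ _ mYA _ (fun x _ => sectionwise x))) => //.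
  by apply: emeasurable_funD => //; exact: measurable_cst.
rewrite ge0_integralD// integral_cst// [X in _ * X](_ : _ = 1) ?mule1//.
exact: probability_setT.
Qed.
End independent_pair.

Definition prokhorov_admissible {R : realType} {T : Type} (d : T -> T -> R)
    (mu nu : set T -> \bar R) : set R :=
  [set e : R | 0 < e /\ forall B, borel_set d B ->
     (mu B <= nu (enlarge d B e) + e%:E)%E].

Lemma prokhorov_le_scale {R : realType} {T T' : Type}
    (d : T -> T -> R) (d' : T' -> T' -> R)
    (mu nu : set T -> \bar R) (mu' nu' : set T' -> \bar R) (c : R) :
  0 < c ->
  (forall e, prokhorov_admissible d mu nu e ->
     prokhorov_admissible d' mu' nu' (c * e)) ->
  (prokhorov d' mu' nu' <= c%:E * prokhorov d mu nu)%E.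
Proof.
move=> c_gt0 admissible_scale; rewrite -ereal_inf_pZl//.
apply: ereal_inf_le_tmp => _ [_ [e He <-] <-].
by exists (c * e); [exact: admissible_scale | rewrite EFinM].
Qed.

Section enlarge.
Context {R : realType} {T : Type} (d : T -> T -> R).
Hypothesis d_metric : is_metric d.

Lemma mopen_enlarge (B : set T) (e : R) : mopen d (enlarge d B e).
Proof.
case: d_metric => _ [_ [dC dT]] x [y By dxy].
exists (e - d x y); first by rewrite subr_gt0.
move=> z dxz; exists y => //; apply: le_lt_trans (dT z x y) _.
by rewrite dC -ltrBrDr.
Qed.

Lemma borel_set_enlarge (B : set T) (e : R) : borel_set d (enlarge d B e).
Proof. by apply: sub_sigma_algebra; exact: mopen_enlarge. Qed.
End enlarge.

Lemma enlarge_preimage_lipschitz {R : realType} {T U : Type}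
    (d : T -> T -> R) (dU : U -> U -> R) (f : T -> U) (K c e : R) (C : set U) :
  (forall y z, 0 <= d y z) -> (forall y z, dU (f y) (f z) <= K * d y z) ->
  K <= c -> 0 < c ->
  enlarge d (f @^-1` C) e `<=` f @^-1` enlarge dU C (c * e).
Proof.
move=> d_ge0 f_lip K_le_c c_gt0 z [y Cfy dzy]; exists (f y) => //.
apply: le_lt_trans (f_lip z y) _; apply: (@le_lt_trans _ _ (c * d z y)).
  by rewrite ler_wpM2r.
by rewrite ltr_pM2l.
Qed.

(* Measurable types are pointed.  The
   measurable sets of [borel_space d t0] are, by conversion, the [borel_set d]. *)
Definition pointed_at (T : Type) (t0 : T) : Type := T.
HB.instance Definition _ (T : Type) (t0 : T) := gen_eqMixin (pointed_at t0).
HB.instance Definition _ (T : Type) (t0 : T) := gen_choiceMixin (pointed_at t0).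
HB.instance Definition _ (T : Type) (t0 : T) := isPointed.Build (pointed_at t0) t0.

Definition borel_space {R : realType} {T : Type} (d : T -> T -> R) (t0 : T) :=
  g_sigma_algebraType (mopen d : set (set (pointed_at t0))).

Lemma rv_measurable_funT {R : realType} {dO : measure_display}
    {Omega : measurableType dO} {T : Type} (d : T -> T -> R) (t0 : T)
    (X : Omega -> T) :
  rv_measurable d X -> measurable_fun setT (X : Omega -> borel_space d t0).
Proof. by move=> mX _ B mB; rewrite setTI; exact: mX. Qed.

Lemma prod_borel_measurable {R : realType} {T1 T2 : Type}
    (d1 : T1 -> T1 -> R) (d2 : T2 -> T2 -> R) (t1 : T1) (t2 : T2) D :
  prod_borel d1 d2 D ->
  measurable (D : set (borel_space d1 t1 * borel_space d2 t2)).
Proof.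
apply: smallest_sub; first exact: sigma_algebra_measurable.
by move=> _ [A [B [mA mB ->]]]; exact: measurableX.
Qed.

Section lipschitz_image.
Context {R : realType} {dO : measure_display} {Omega : measurableType dO}.
Context (P : probability Omega R).
Context {S S' U : Type} (d : S -> S -> R) (d' : S' -> S' -> R) (dU : U -> U -> R).
Hypotheses (d_metric : is_metric d) (dU_metric : is_metric dU).
Variables (g : S' * S -> U) (K c : R).
Hypothesis g_meas : forall C, borel_set dU C -> prod_borel d' d (g @^-1` C).
Hypothesis g_lip : forall x y z, dU (g (x, y)) (g (x, z)) <= K * d y z.
Hypotheses (c_ge1 : 1 <= c) (K_le_c : K <= c).
Variables (X : Omega -> S') (Y Z : Omega -> S).
Hypotheses (hX : rv_measurable d' X) (hY : rv_measurable d Y)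
  (hZ : rv_measurable d Z).
Hypotheses (iXY : independent_rv P d' d X Y) (iXZ : independent_rv P d' d X Z).

Lemma prokhorov_admissible_lipschitz e :
  prokhorov_admissible d (law P Y) (law P Z) e ->
  prokhorov_admissible dU (law P (fun w => g (X w, Y w)))
    (law P (fun w => g (X w, Z w))) (c * e).
Proof.
move=> [e_gt0 YZe]; have c_gt0 : 0 < c := lt_le_trans ltr01 c_ge1.
split=> [|C hC]; first exact: mulr_gt0.
pose S'm := borel_space d' (X point); pose Sm := borel_space d (Y point).
pose Xm : {RV P >-> S'm} := mfun_Sub (mem_set (rv_measurable_funT hX)).
pose Ym : {RV P >-> Sm} := mfun_Sub (mem_set (rv_measurable_funT hY)).
pose Zm : {RV P >-> Sm} := mfun_Sub (mem_set (rv_measurable_funT hZ)).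
pose A : set (S'm * Sm) := g @^-1` C.
pose D : set (S'm * Sm) := g @^-1` enlarge dU C (c * e).
have mA : measurable A by apply: prod_borel_measurable; exact: g_meas.
have mD : measurable D.
  by apply: prod_borel_measurable; apply: g_meas; exact: borel_set_enlarge.
apply: le_trans (independent_pair_preimage_le (X := Xm) (Y := Ym) (Z := Zm)
  iXY iXZ mA mD (ltW e_gt0) _) _.
  move=> x; apply: le_trans (YZe _ (measurable_xsection x mA)) _.
  rewrite leeD2r// (le_measure (distribution P Zm)) ?inE//.
  - exact: borel_set_enlarge.
  - exact: measurable_xsection.
  rewrite !xsectionE.
  apply: (enlarge_preimage_lipschitz (f := fun y => g (x, y))) => //.
  by case: d_metric.
by rewrite leeD2l// lee_fin ler_peMl// ltW.
Qed.
End lipschitz_image.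

Theorem theorem3p6 (R : realType) (dO : measure_display) (Omega : measurableType dO)
  (P : probability Omega R)
  (S S' U : Type) (d : S -> S -> R) (d' : S' -> S' -> R) (dU : U -> U -> R)
  (hS : polish d) (hS' : polish d') (hU : polish dU)
  (g : S' * S -> U) (K : R)
  (g_meas : forall C, borel_set dU C -> prod_borel d' d (g @^-1` C))
  (g_lip : forall x y z, dU (g (x, y)) (g (x, z)) <= K * d y z)
  (X : Omega -> S') (Y Z : Omega -> S)
  (hX : rv_measurable d' X) (hY : rv_measurable d Y) (hZ : rv_measurable d Z)
  (iXY : independent_rv P d' d X Y) (iXZ : independent_rv P d' d X Z) :
  (prokhorov dU (law P (fun w => g (X w, Y w))) (law P (fun w => g (X w, Z w)))
   <= (Num.max 1 K)%:E * prokhorov d (law P Y) (law P Z))%E.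
Proof.
case: hS => d_metric _ _; case: hU => dU_metric _ _.
have c_ge1 : 1 <= Num.max 1 K by rewrite le_max lexx.
have K_le_c : K <= Num.max 1 K by rewrite le_max lexx orbT.
apply: prokhorov_le_scale; first exact: lt_le_trans ltr01 c_ge1.
exact: (prokhorov_admissible_lipschitz d_metric dU_metric g_meas g_lip c_ge1 K_le_c
  hX hY hZ iXY iXZ).
Qed.
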